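(* Let $A\in\mathbb{R}^{m\times m}$ be symmetric, $B\in\mathbb{R}^{m\times k}$ with $k\le m$, and consider the quadratic problem on the Stiefel manifold $$\min_{W\in\mathbb{R}^{m\times k},\ W^TW=I_k} f(W),\qquad f(W)=\operatorname{Tr}(W^TAW-2W^TB).$$ Run the generalized power iteration method (GPI) described below. Then the algorithm decreases the value of $f$ monotonically in each iteration until it converges; that is, if $W$ is the current iterate and $\tilde{W}$ is the updated iterate, then $f(\tilde{W})\le f(W)$.
   Context: The generalized power iteration method (GPI) for this problem is: (1) Choose a constant $\alpha$ such that $\tilde{A}=\alpha I_m-A$ is positive definite, and choose an (arbitrary, e.g. random) initial $W\in\mathbb{R}^{m\times k}$ with $W^TW=I_k$. (2) Set $M\leftarrow 2\tilde{A}W+2B\in\mathbb{R}^{m\times k}$. (3) Compute a compact singular value decomposition $M=USV^T$ with $U\in\mathbb{R}^{m\times k}$ having orthonormal columns, $S\in\mathbb{R}^{k\times k}$ diagonal with nonnegative entries, and $V\in\mathbb{R}^{k\times k}$ orthogonal. (4) Update $W\leftarrow UV^T$. (5) Repeat steps (2)–(4) until convergence. $I_k$ denotes the $k\times k$ identity matrix and $\operatorname{Tr}$ the trace. *)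

From mathcomp Require Import all_boot all_order all_algebra.
From mathcomp Require Import all_reals.
Set Implicit Arguments. Unset Strict Implicit. Unset Printing Implicit Defensive.
Import Order.TTheory GRing.Theory Num.Theory.
Local Open Scope ring_scope.

Definition stiefel_obj {R : realType} {m k : nat}
  (A : 'M[R]_m) (B : 'M[R]_(m, k)) (W : 'M[R]_(m, k)) : R :=
  \tr (W^T *m A *m W - 2%:R *: (W^T *m B)).

Definition posdef {R : realType} {m : nat} (P : 'M[R]_m) : Prop :=
  P^T = P /\ forall x : 'cV[R]_m, x != 0 -> 0 < (x^T *m P *m x) 0 0.

(** With P = alpha I - A positive semidefinite, the objective on the Stiefel
    manifold is f(X) = alpha k - Tr(X^T P X) - 2 Tr(X^T B).  Convexity of
    X |-> Tr(X^T P X) gives f(X) <= f(W) - Tr((X - W)^T M) for M = 2 P W + 2 B,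
    so every X increasing the linear form Tr(X^T M) decreases f.  The polar
    factor U V^T of M = U S V^T maximises that form: Tr((U V^T)^T M) = Tr S,
    while Tr(X^T M) = sum_i ((X V)^T U)_ii S_ii <= Tr S because diagonal
    entries of a product of two Stiefel matrices are at most 1. *)

From mathcomp Require Import all_boot all_order all_algebra.
From mathcomp Require Import all_reals.
From mathcomp Require Import lra.
Set Implicit Arguments. Unset Strict Implicit. Unset Printing Implicit Defensive.
Import Order.TTheory GRing.Theory Num.Theory.
Local Open Scope ring_scope.

Definition posemidef {R : numDomainType} {m : nat} (P : 'M[R]_m) : Prop :=
  forall x : 'cV[R]_m, 0 <= (x^T *m P *m x) 0 0.

Lemma posdef_posemidef (R : realType) (m : nat) (P : 'M[R]_m) :
  posdef P -> posemidef P.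
Proof.
move=> [_ P_pd] x; have [->|x_nz] := eqVneq x 0; last exact/ltW/P_pd.
by rewrite mulmx0 mxE.
Qed.

Section StiefelMatrices.

Variable R : realDomainType.

Lemma mxtrace_quad_ge0 (m k : nat) (P : 'M[R]_m) (D : 'M[R]_(m, k)) :
  posemidef P -> 0 <= \tr (D^T *m P *m D).
Proof.
move=> P_psd; apply: sumr_ge0 => i _.
have -> : (D^T *m P *m D) i i = ((col i D)^T *m P *m col i D) 0 0.
  rewrite !mxE; apply: eq_bigr => j _; rewrite !mxE; congr (_ * _).
  by apply: eq_bigr => l _; rewrite !mxE.
exact: P_psd.
Qed.

Lemma mxtrace_quad_tangent_le (m k : nat) (P : 'M[R]_m) (X Y : 'M[R]_(m, k)) :
  P^T = P -> posemidef P ->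
  2 * \tr (X^T *m P *m Y) - \tr (Y^T *m P *m Y) <= \tr (X^T *m P *m X).
Proof.
move=> P_sym P_psd.
have cross_sym : \tr (Y^T *m P *m X) = \tr (X^T *m P *m Y).
  by rewrite -mxtrace_tr !trmx_mul P_sym trmxK mulmxA.
have := mxtrace_quad_ge0 (X - Y) P_psd.
rewrite mulmxBr [(X - Y)^T]linearB /= !mulmxBl !linearB /= cross_sym; lra.
Qed.

Lemma stiefel_mul_diag_le1 (m k : nat) (X U : 'M[R]_(m, k)) (i : 'I_k) :
  X^T *m X = 1%:M -> U^T *m U = 1%:M -> (X^T *m U) i i <= 1.
Proof.
move=> X_st U_st.
have dist_ge0 : 0 <= ((X - U)^T *m (X - U)) i i.
  by rewrite mxE; apply: sumr_ge0 => r _; rewrite !mxE -expr2 sqr_ge0.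
have cross_sym : (U^T *m X) i i = (X^T *m U) i i.
  by rewrite -[U^T *m X]trmxK trmx_mul trmxK mxE.
move: dist_ge0; rewrite [(X - U)^T]linearB /= mulmxBl !mulmxBr X_st U_st !mxE eqxx /=.
move: cross_sym; rewrite !mxE => ->; lra.
Qed.

Lemma mxtrace_mul_diag (k : nat) (N S : 'M[R]_k) :
  is_diag_mx S -> \tr (N *m S) = \sum_i N i i * S i i.
Proof.
move=> /is_diag_mxP S_diag; apply: eq_bigr => i _.
rewrite mxE (bigD1 i) //= big1 ?addr0 // => j ji.
by rewrite S_diag ?mulr0 // eq_sym.
Qed.

Lemma mxtrace_stiefel_mul_diag_le (m k : nat) (X U : 'M[R]_(m, k)) (S : 'M[R]_k) :
  X^T *m X = 1%:M -> U^T *m U = 1%:M ->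
  is_diag_mx S -> (forall i, 0 <= S i i) ->
  \tr (X^T *m U *m S) <= \tr S.
Proof.
move=> X_st U_st S_diag S_ge0; rewrite mxtrace_mul_diag //.
apply: ler_sum => i _; rewrite -[leRHS]mul1r.
exact/ler_wpM2r/stiefel_mul_diag_le1.
Qed.

Lemma stiefel_mul_orthogonal (m k : nat) (U : 'M[R]_(m, k)) (V : 'M[R]_k) :
  U^T *m U = 1%:M -> V *m V^T = 1%:M -> (U *m V^T)^T *m (U *m V^T) = 1%:M.
Proof.
by move=> U_st V_orth; rewrite trmx_mul trmxK mulmxA -(mulmxA V) U_st mulmx1.
Qed.

Lemma mxtrace_polar_svd (m k : nat) (U : 'M[R]_(m, k)) (S V : 'M[R]_k) :
  U^T *m U = 1%:M -> V^T *m V = 1%:M ->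
  \tr ((U *m V^T)^T *m (U *m S *m V^T)) = \tr S.
Proof.
move=> U_st V_orth; rewrite trmx_mul trmxK !mulmxA -(mulmxA V) U_st mulmx1.
by rewrite mxtrace_mulC !mulmxA V_orth mul1mx.
Qed.

Lemma mxtrace_stiefel_svd_le (m k : nat) (X U : 'M[R]_(m, k)) (S V : 'M[R]_k) :
  X^T *m X = 1%:M -> U^T *m U = 1%:M ->
  is_diag_mx S -> (forall i, 0 <= S i i) -> V^T *m V = 1%:M ->
  \tr (X^T *m (U *m S *m V^T)) <= \tr S.
Proof.
move=> X_st U_st S_diag S_ge0 V_orth.
have XV_st : (X *m V)^T *m (X *m V) = 1%:M.
  by rewrite trmx_mul -mulmxA (mulmxA X^T) X_st mul1mx.
rewrite !mulmxA mxtrace_mulC !mulmxA -trmx_mul.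
exact: mxtrace_stiefel_mul_diag_le.
Qed.

End StiefelMatrices.

Lemma stiefel_obj_shift (R : realType) (m k : nat) (P : 'M[R]_m) (alpha : R)
    (B X : 'M[R]_(m, k)) :
  X^T *m X = 1%:M ->
  stiefel_obj (alpha%:M - P) B X
    = alpha * k%:R - \tr (X^T *m P *m X) - 2 * \tr (X^T *m B).
Proof.
move=> X_st; rewrite /stiefel_obj mulmxBr mul_mx_scalar mulmxBl -scalemxAl X_st.
by rewrite !linearB /= !linearZ /= mxtrace1.
Qed.

Lemma stiefel_obj_le_of_mxtrace_le (R : realType) (m k : nat) (P : 'M[R]_m)
    (alpha : R) (B W X : 'M[R]_(m, k)) :
  P^T = P -> posemidef P -> W^T *m W = 1%:M -> X^T *m X = 1%:M ->
  \tr (W^T *m (2%:R *: (P *m W) + 2%:R *: B))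
    <= \tr (X^T *m (2%:R *: (P *m W) + 2%:R *: B)) ->
  stiefel_obj (alpha%:M - P) B X <= stiefel_obj (alpha%:M - P) B W.
Proof.
move=> P_sym P_psd W_st X_st.
have tangent := mxtrace_quad_tangent_le X W P_sym P_psd.
rewrite !stiefel_obj_shift // !mulmxDr -!scalemxAr !linearD /= !linearZ /=.
rewrite !mulmxA; lra.
Qed.

Theorem theorem2 (R : realType) (m k : nat)
  (A : 'M[R]_m) (B : 'M[R]_(m, k)) (alpha : R) (W : 'M[R]_(m, k))
  (U : 'M[R]_(m, k)) (S : 'M[R]_k) (V : 'M[R]_k) :
  (k <= m)%N ->
  A^T = A ->
  posdef (alpha%:M - A) ->
  W^T *m W = 1%:M ->
  U^T *m U = 1%:M ->
  is_diag_mx S ->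
  (forall i : 'I_k, 0 <= S i i) ->
  V^T *m V = 1%:M -> V *m V^T = 1%:M ->
  2%:R *: ((alpha%:M - A) *m W) + 2%:R *: B = U *m S *m V^T ->
  stiefel_obj A B (U *m V^T) <= stiefel_obj A B W.
Proof.
move=> _ _ P_pd W_st U_st S_diag S_ge0 V_orth V_orth' M_svd.
have [P_sym _] := P_pd.
rewrite -(subKr alpha%:M A).
apply: (stiefel_obj_le_of_mxtrace_le _ P_sym (posdef_posemidef P_pd) W_st).
  exact: stiefel_mul_orthogonal.
rewrite M_svd mxtrace_polar_svd //.
exact: mxtrace_stiefel_svd_le.
Qed.
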